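(* Let $\mathcal{M}_X$ be a circular orientable embedding of a connected graph $X$. Let $Y$ be a connected voltage graph of $X$, and let $\mathcal{M}_Y$ be the associated voltage embedding. Let $\rho$ be the partition of the arcs of $Y$ whose classes are the preimages of the arcs of $X$, and let $\widehat L$ be its normalized characteristic matrix. If $U_X$ and $U_Y$ are the vertex-face transition matrices of $\mathcal{M}_X$ and $\mathcal{M}_Y$, then \[U_X=\widehat L^TU_Y\widehat L.\] Consequently, the $H$-digraph of $\mathcal{M}_X$ is a quotient digraph of the $H$-digraph of $\mathcal{M}_Y$.
   Context: Setting. A circular embedding is a cellular embedding in which every face is bounded by a cycle. Arcs are ordered pairs $(u,v)$ with $\{u,v\}$ an edge, and $u$ is the tail. Vertex-face transition matrix. Fix a consistent orientation of the faces, so that each edge shared by two faces receives opposite directions in them; then every arc lies in exactly one facial walk. Let $M$ be the arc-face incidence matrix and $N$ the arc-tail incidence matrix ($N_{(a,b),u}=1$ iff $a=u$). Let $\widehat M,\widehat N$ be these matrices with columns scaled to unit length. The transition matrix is $U=(2\widehat M\widehat M^T-I)(2\widehat N\widehat N^T-I)$. Voltage graph. Let $\Gamma$ be a group of order $r$ and $\phi$ a map from the arcs of $X$ to $\Gamma$ with $\phi(v,u)=\phi(u,v)^{-1}$. The voltage graph $Y=X^\phi$ has vertex set $V(X)\times\Gamma$, with $(u,g)$ adjacent to $(v,g\phi(u,v))$ for each arc $(u,v)$ of $X$. The covering map $\psi(u,g)=u$ is a homomorphism that is a bijection on neighbourhoods. Voltage embedding. The voltage embedding $\mathcal{M}_Y$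 is the orientable embedding of $Y$ whose facial walks are the closed walks into which the preimages under $\psi$ of the (oriented) facial walks of $\mathcal{M}_X$ decompose. Normalized characteristic matrix. The characteristic matrix of a partition has a column for each class, equal to the indicator vector of that class; normalizing scales each column to unit length. $H$-digraph. The principal Hamiltonian of a unitary $V$ with spectral decomposition $\sum\alpha_rF_r$ is $-i\sum\log(\alpha_r)F_r$, with $-\pi<-i\log\alpha_r\le\pi$. The $H$-digraph of an embedding is the weighted digraph on the arcs whose weighted adjacency matrix is the principal Hamiltonian of $U^2$. Quotient digraph. The quotient digraph of a weighted digraph with weighted adjacency matrix $H$, with respect to a partition with normalized characteristic matrix $\widehat L$, is the weighted digraph on the classes with weighted adjacency matrix $\widehat L^TH\widehat L$. *)

From HB Require Import structures.
From mathcomp Require Import all_boot all_order all_algebra all_fingroup.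
From mathcomp Require Import reals exp trigo.
From mathcomp Require Import complex.
From Stdlib Require Import ClassicalEpsilon.

Set Implicit Arguments.
Unset Strict Implicit.
Unset Printing Implicit Defensive.

Import Order.TTheory GRing.Theory Num.Theory.
Local Open Scope ring_scope.

Definition garc (V : finType) (adj : rel V) : finType :=
  {p : V * V | adj p.1 p.2}.

Definition arc_tail (V : finType) (adj : rel V) (a : garc adj) : V := (val a).1.
Definition arc_head (V : finType) (adj : rel V) (a : garc adj) : V := (val a).2.

(* the reverse arc (v,u) of (u,v); (defaults to a itself if adj is not symmetric) *)
Definition arc_rev (V : finType) (adj : rel V) (a : garc adj) : garc adj :=
  insubd a ((val a).2, (val a).1).

Definition simple_graph (V : finType) (adj : rel V) : Prop :=
  symmetric adj /\ irreflexive adj.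

Definition connected_graph (V : finType) (adj : rel V) : Prop :=
  forall u v : V, connect adj u v.

(* Orientable cellular embeddings, given by a rotation system: rot maps
   each arc (u,v) to the next arc out of u in the cyclic order at u.                                                *)

Definition rotation_system (V : finType) (adj : rel V) (rot : garc adj -> garc adj) : Prop :=
  injective rot /\
  (forall a, arc_tail (rot a) = arc_tail a) /\
  (forall a b, arc_tail a = arc_tail b -> fconnect rot a b).

Definition face_succ (V : finType) (adj : rel V) (rot : garc adj -> garc adj)
  (a : garc adj) : garc adj := rot (arc_rev a).

Definition faces_of (A : finType) (e : rel A) : {set {set A}} :=
  [set [set b | connect e a b] | a : A].

Definition circular (V : finType) (adj : rel V) (e : rel (garc adj)) : Prop :=
  forall F, F \in faces_of e ->
    (2 < #|F|)%N /\ {in F &, injective (@arc_tail V adj)}.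

(* Voltage graphs.  volt u v is the voltage of the arc (u,v) (its values
   on non-arcs are irrelevant).                                         *)

Definition voltage_ok (V : finType) (adj : rel V) (gT : finGroupType)
  (volt : V -> V -> gT) : Prop :=
  forall u v, adj u v -> volt v u = (volt u v)^-1%g.

Definition volt_adj (V : finType) (adj : rel V) (gT : finGroupType)
  (volt : V -> V -> gT) : rel (V * gT) :=
  fun x y => adj x.1 y.1 && (y.2 == (x.2 * volt x.1 y.1)%g).

Lemma volt_adj_cover (V : finType) (adj : rel V) (gT : finGroupType)
  (volt : V -> V -> gT) (p : (V * gT) * (V * gT)) :
  volt_adj adj volt p.1 p.2 -> adj p.1.1 p.2.1.
Proof. by case/andP. Qed.

Definition cover_arc (V : finType) (adj : rel V) (gT : finGroupType)
  (volt : V -> V -> gT) (b : garc (volt_adj adj volt)) : garc adj :=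
  exist _ ((val b).1.1, (val b).2.1) (volt_adj_cover (valP b)).

(* the facial walks of the voltage embedding M_Y: the lifts of the facial
   walks of M_X, i.e. b follows a iff head a = tail b and psi(b) follows psi(a) *)
Definition voltage_face_rel (V : finType) (adj : rel V) (gT : finGroupType)
  (volt : V -> V -> gT) (succX : garc adj -> garc adj) : rel (garc (volt_adj adj volt)) :=
  fun a b => (arc_head a == arc_tail b) &&
             (cover_arc b == succX (cover_arc a)).

(* scale every column of B to unit length (a zero column stays zero) *)
Definition normalize_cols (R : rcfType) m n (B : 'M[R]_(m, n)) : 'M[R]_(m, n) :=
  \matrix_(i, j) (B i j / Num.sqrt (\sum_(k < m) B k j ^+ 2)).

Definition arc_face_mx (R : rcfType) (A : finType) (P : {set {set A}}) :
  'M[R]_(#|A|, #|P|) :=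
  \matrix_(i, j) ((enum_val i \in (enum_val j : {set A})) : nat)%:R.

Definition arc_tail_mx (R : rcfType) (A V : finType) (tail : A -> V) :
  'M[R]_(#|A|, #|V|) :=
  \matrix_(i, j) ((tail (enum_val i) == enum_val j) : nat)%:R.

Definition transition_mx (R : rcfType) (A V : finType) (tail : A -> V)
  (P : {set {set A}}) : 'M[R]_#|A| :=
  let Mh := normalize_cols (arc_face_mx R P) in
  let Nh := normalize_cols (arc_tail_mx R tail) in
  (2%:R *: (Mh *m Mh^T) - 1%:M) *m (2%:R *: (Nh *m Nh^T) - 1%:M).

(* normalized characteristic matrix of the partition rho of the arcs of Y
   whose classes are the preimages psi^{-1}(a), a arc of X (column j
   corresponds to the class of the j-th arc of X) *)
Definition cover_char_mx (R : rcfType) (V : finType) (adj : rel V) (gT : finGroupType)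
  (volt : V -> V -> gT) : 'M[R]_(#|garc (volt_adj adj volt)|, #|garc adj|) :=
  normalize_cols (\matrix_(i, j) ((cover_arc (enum_val i) == enum_val j) : nat)%:R).

Local Open Scope complex_scope.

Definition carg (R : realType) (z : R[i]) : R :=
  epsilon (inhabits 0) (fun t : R => - pi < t <= pi /\
     z = ((ComplexField.Normc.normc z)%:C * (cos t +i* sin t))%C).

Definition clog (R : realType) (z : R[i]) : R[i] :=
  (ln (ComplexField.Normc.normc z) +i* carg z).

Definition ctrmx (R : realType) n (A : 'M[R[i]]_n) : 'M[R[i]]_n :=
  (map_mx (@conjc R) A)^T.

Definition spectral_decomposition (R : realType) n (W : 'M[R[i]]_n)
  (s : seq R[i]) (F : R[i] -> 'M[R[i]]_n) : Prop :=
  uniq s /\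
  (forall a, a \in s -> F a != 0 /\ F a *m F a = F a /\ ctrmx (F a) = F a) /\
  (forall a b, a \in s -> b \in s -> a != b -> F a *m F b = 0) /\
  \sum_(a <- s) F a = 1%:M /\
  W = \sum_(a <- s) a *: F a.

Definition principal_hamiltonian (R : realType) n (W H : 'M[R[i]]_n) : Prop :=
  exists s F, spectral_decomposition W s F /\
    H = \sum_(a <- s) (- 'i * clog a) *: F a.

Definition cmx (R : realType) m n (A : 'M[R]_(m, n)) : 'M[R[i]]_(m, n) :=
  map_mx (fun x => x%:C) A.

(* weighted adjacency matrix of the quotient digraph w.r.t. Lh *)
Definition quotient_mx (R : realType) m n (H : 'M[R[i]]_m) (Lh : 'M[R]_(m, n)) :
  'M[R[i]]_n := (cmx Lh)^T *m H *m cmx Lh.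

Arguments voltage_face_rel {V adj gT} volt succX.
Arguments cover_char_mx R {V adj gT} volt.
Arguments cover_arc {V adj gT} volt b.

(* The covering map psi commutes with the face successors of M_Y and M_X and its
   fibres on arcs all have |Gamma| elements, so L^T L = 1.  Each transition matrix is
   a product of two reflections 2P - 1 about orthogonal projections P, and L
   intertwines the projections of Y with those of X: for the tail projections because
   psi is a bijection on out-neighbourhoods, for the face projections because the
   entry [a ~ b] / |face of a| is the time average of [f^k a = b] over any common
   multiple of the face lengths, which psi transports.  Hence U_Y L = L U_X, giving
   U_X = L^T U_Y L.  For the Hamiltonians, the eigenprojections F_a of U_X^2 and G_b
   of U_Y^2 satisfy G_b L F_a = 0 whenever a <> b, so L^T h(U_Y^2) L = h(U_X^2) for
   every function h of the spectrum, in particular for -i log. *)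

From HB Require Import structures.
From mathcomp Require Import all_boot all_order all_algebra all_fingroup.
From mathcomp Require Import reals exp trigo.
From mathcomp Require Import complex.
From mathcomp Require Import ring.

Set Implicit Arguments.
Unset Strict Implicit.
Unset Printing Implicit Defensive.

Import Order.TTheory GRing.Theory Num.Theory.
Local Open Scope ring_scope.

Section KernelMatrix.
Variable R : pzSemiRingType.

Definition kmx (A B : finType) (k : A -> B -> R) : 'M[R]_(#|A|, #|B|) :=
  \matrix_(i, j) k (enum_val i) (enum_val j).

Lemma mul_kmx (A B C : finType) (k1 : A -> B -> R) (k2 : B -> C -> R) :
  kmx k1 *m kmx k2 = kmx (fun a c => \sum_b k1 a b * k2 b c).
Proof.
apply/matrixP=> i j; rewrite !mxE.
rewrite (big_enum_val (A := predT) (fun b => k1 (enum_val i) b * k2 b (enum_val j))).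
by apply: eq_bigr => l _; rewrite !mxE.
Qed.

Lemma tr_kmx (A B : finType) (k : A -> B -> R) :
  (kmx k)^T = kmx (fun b a => k a b).
Proof. by apply/matrixP=> i j; rewrite !mxE. Qed.

Lemma eq_kmx (A B : finType) (k1 k2 : A -> B -> R) :
  (forall a b, k1 a b = k2 a b) -> kmx k1 = kmx k2.
Proof. by move=> eq_k; apply/matrixP=> i j; rewrite !mxE eq_k. Qed.

Lemma sum_eq_delta (A : finType) (x : A) (F : A -> R) :
  \sum_b ((x == b)%:R * F b) = F x.
Proof.
rewrite (bigD1 x) //= eqxx mul1r big1 ?addr0 // => b /negPf.
by rewrite eq_sym => ->; rewrite mul0r.
Qed.

Lemma sqr_natb (b : bool) : ((b : nat)%:R : R) ^+ 2 = (b : nat)%:R.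
Proof. by case: b; rewrite ?expr1n ?expr0n. Qed.

End KernelMatrix.

Lemma mulr_div_sqrt (R : rcfType) (x y n : R) : 0 <= n ->
  x / Num.sqrt n * (y / Num.sqrt n) = x * y / n.
Proof. by move=> n_ge0; rewrite mulrACA -invfM -expr2 sqr_sqrtr. Qed.

Definition outdeg (R : pzSemiRingType) (A V : finType) (tail : A -> V) (v : V) : R :=
  \sum_c ((tail c == v) : nat)%:R.

Section Projectors.
Variable R : rcfType.

Lemma face_projector (A : finType) (f : A -> A) : injective f ->
  let Mh := normalize_cols (arc_face_mx R (faces_of (frel f))) in
  Mh *m Mh^T = kmx (fun a b => (fconnect f a b : nat)%:R / (fingraph.order f a)%:R).
Proof.
move=> f_inj Mh; apply/matrixP=> i j; rewrite !mxE.
set a := enum_val i; set b := enum_val j.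
have colE F : \sum_(k < #|A|) arc_face_mx R (faces_of (frel f)) k F ^+ 2
              = #|enum_val F|%:R.
  under eq_bigr => k _ do rewrite mxE sqr_natb.
  rewrite -(big_enum_val (A := predT) (fun x => ((x \in enum_val F) : nat)%:R)) /=.
  by rewrite -natr_sum -sum1_card [in RHS]big_mkcond.
under eq_bigr => F _ do rewrite !mxE colE mulr_div_sqrt ?ler0n //.
rewrite /= -(big_enum_val (fun F : {set A} =>
  ((a \in F) : nat)%:R * ((b \in F) : nat)%:R / #|F|%:R)).
rewrite (bigD1 [set x | fconnect f a x]) /=; last by apply/imsetP; exists a.
rewrite big1 ?addr0; first by rewrite !inE connect0 mul1r cardsE.
move=> F /andP[/imsetP[c _ ->] neF].
case: (boolP (a \in [set x | fconnect f c x])) => [|_]; last by rewrite !mul0r.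
rewrite inE => ca; case/eqP: neF; apply/setP=> x; rewrite !inE.
apply/idP/idP => [ax|]; last exact: connect_trans.
by rewrite (connect_trans _ ax) // fconnect_sym.
Qed.

Lemma tail_projector (A V : finType) (tail : A -> V) :
  let Nh := normalize_cols (arc_tail_mx R tail) in
  Nh *m Nh^T = kmx (fun a b => ((tail a == tail b) : nat)%:R / outdeg R tail (tail a)).
Proof.
move=> Nh; apply/matrixP=> i j; rewrite !mxE.
set a := enum_val i; set b := enum_val j.
have colE v : \sum_(k < #|A|) arc_tail_mx R tail k v ^+ 2 = outdeg R tail (enum_val v).
  under eq_bigr => k _ do rewrite mxE sqr_natb.
  by rewrite -(big_enum_val (A := predT) (fun x => ((tail x == enum_val v) : nat)%:R)).
have deg_ge0 v : 0 <= outdeg R tail v by apply: sumr_ge0 => c _; exact: ler0n.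
under eq_bigr => v _ do rewrite !mxE colE mulr_div_sqrt // -mulrA.
rewrite /= -(big_enum_val (A := predT) (fun v =>
  ((tail a == v) : nat)%:R * (((tail b == v) : nat)%:R / outdeg R tail v))) /=.
by rewrite sum_eq_delta eq_sym.
Qed.

End Projectors.

Section OrbitAverage.
Variables (A : finType) (f : A -> A).
Hypothesis f_inj : injective f.

Lemma sum_iter_eq_count x n b :
  (\sum_(i < n) (iter i f x == b) = count_mem b (traject f x n))%N.
Proof.
elim: n => [|n IHn]; first by rewrite big_ord0.
by rewrite big_ord_recr IHn trajectSr -cats1 count_cat /= addn0.
Qed.

Lemma iter_muln_order m x : iter (m * fingraph.order f x) f x = x.
Proof. by elim: m => [|m IHm] //; rewrite mulSn iterD IHm iter_order. Qed.

Lemma sum_iter_muln_order m a b :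
  (\sum_(k < m * fingraph.order f a) (iter k f a == b) = m * fconnect f a b)%N.
Proof.
elim: m => [|m IHm]; first by rewrite mul0n big_ord0.
rewrite mulSnr big_split_ord /= IHm mulSnr; congr (_ + _)%N.
under eq_bigr => i _ do rewrite addnC iterD iter_muln_order.
by rewrite sum_iter_eq_count count_uniq_mem ?orbit_uniq // fconnect_orbit.
Qed.

Lemma fconnect_time_average (R : numFieldType) N :
  (0 < N)%N -> (forall x, fingraph.order f x %| N)%N -> forall a b,
  (fconnect f a b : nat)%:R / (fingraph.order f a)%:R
  = (\sum_(k < N) ((iter k f a == b) : nat)%:R) / (N%:R : R).
Proof.
move=> N_gt0 dvd_N a b; case/dvdnP: (dvd_N a) N_gt0 => q -> qo_gt0.
rewrite -natr_sum sum_iter_muln_order !natrM invfM mulrACA mulfV ?mul1r //.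
by rewrite pnatr_eq0 -lt0n; move: qo_gt0; rewrite muln_gt0 => /andP[].
Qed.

End OrbitAverage.

Lemma order_dvdn_fact (A : finType) (f : A -> A) n : (#|A| <= n)%N ->
  forall x, (fingraph.order f x %| n`!)%N.
Proof.
move=> An x; apply: dvdn_fact; rewrite fingraph.order_gt0 /=.
exact: leq_trans (max_card _) An.
Qed.

Section VoltageArcs.
Variable R : pzSemiRingType.
Variables (V : finType) (adj : rel V) (gT : finGroupType) (volt : V -> V -> gT).

Local Notation AY := (garc (volt_adj adj volt)).
Local Notation cov := (cover_arc volt).

Lemma volt_arcE (c : AY) :
  (val c).2.2 = ((val c).1.2 * volt (val c).1.1 (val c).2.1)%g.
Proof. by case/andP: (valP c) => _ /eqP. Qed.

Lemma lift_arc_subproof (b : garc adj) g :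
  volt_adj adj volt ((val b).1, g) ((val b).2, (g * volt (val b).1 (val b).2)%g).
Proof. by rewrite /volt_adj /= (valP b) eqxx. Qed.

Definition lift_arc (b : garc adj) (g : gT) : AY :=
  exist _ (((val b).1, g), ((val b).2, (g * volt (val b).1 (val b).2)%g))
    (lift_arc_subproof b g).

Lemma cover_lift_arc b g : cov (lift_arc b g) = b.
Proof. by apply: val_inj; rewrite /= -surjective_pairing. Qed.

Lemma lift_arc_cover (c : AY) : lift_arc (cov c) (val c).1.2 = c.
Proof. by apply: val_inj; rewrite /= -volt_arcE -!surjective_pairing. Qed.

Lemma lift_arc_inj b1 b2 g1 g2 :
  lift_arc b1 g1 = lift_arc b2 g2 -> b1 = b2 /\ g1 = g2.
Proof.
move=> e; split; first by rewrite -(cover_lift_arc b1 g1) e cover_lift_arc.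
by have := congr1 (fun c : AY => (val c).1.2) e.
Qed.

Lemma sum_cover_fiber_tail (b : garc adj) (v : V * gT) :
  \sum_(c : AY) (((arc_tail c == v) : nat)%:R * ((cov c == b) : nat)%:R : R)
  = ((arc_tail b == v.1) : nat)%:R.
Proof.
case: v => x g /=; case: (eqVneq (arc_tail b) x) => [<- | tail_b_neq].
  rewrite -[RHS](sum_eq_delta (lift_arc b g) (fun _ => 1 : R)).
  apply: eq_bigr => c _; rewrite mulr1 -natrM mulnb; congr ((_ : nat)%:R).
  congr nat_of_bool; apply/andP/eqP => [[/eqP tail_c /eqP cov_c] | <-].
    by rewrite -(lift_arc_cover c) cov_c; congr lift_arc; have := congr1 snd tail_c.
  by rewrite cover_lift_arc.
rewrite big1 // => c _; rewrite -natrM mulnb.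
case: andP => [[/eqP tail_c /eqP cov_c] | //].
by case/eqP: tail_b_neq; rewrite -cov_c; have := congr1 fst tail_c.
Qed.

Lemma sum_cover_fiber (b : garc adj) :
  \sum_(c : AY) ((cov c == b) : nat)%:R = (#|gT|%:R : R).
Proof.
transitivity (\sum_(c : AY) \sum_(v : V * gT)
   (((arc_tail c == v) : nat)%:R * ((cov c == b) : nat)%:R : R)).
  by apply: eq_bigr => c _; rewrite sum_eq_delta.
rewrite exchange_big /=.
under eq_bigr => v _ do rewrite sum_cover_fiber_tail.
rewrite -(pair_big predT predT (fun x (g : gT) => ((arc_tail b == x) : nat)%:R : R)) /=.
under eq_bigr => x _ do rewrite sumr_const.
rewrite -[RHS](sum_eq_delta (arc_tail b) (fun _ => (#|gT|%:R : R))).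
by apply: eq_bigr => x _; rewrite mulr_natr.
Qed.

Lemma outdeg_volt_adj (x : V) (g : gT) :
  outdeg R (@arc_tail _ (volt_adj adj volt)) (x, g) = outdeg R (@arc_tail V adj) x.
Proof.
transitivity (\sum_(c : AY) \sum_(b : garc adj)
   (((arc_tail c == (x, g)) : nat)%:R * ((cov c == b) : nat)%:R : R)).
  apply: eq_bigr => c _; rewrite -[LHS](sum_eq_delta (cov c)
    (fun _ => ((arc_tail c == (x, g)) : nat)%:R)).
  by apply: eq_bigr => b _; rewrite -!natrM mulnC.
by rewrite exchange_big /=; apply: eq_bigr => b _; rewrite sum_cover_fiber_tail.
Qed.

End VoltageArcs.

Section LiftedFaces.
Variables (V : finType) (adj : rel V) (gT : finGroupType) (volt : V -> V -> gT).
Variable rot : garc adj -> garc adj.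

Local Notation AY := (garc (volt_adj adj volt)).
Local Notation fX := (face_succ rot).
Local Notation cov := (cover_arc volt).

Definition lift_face_succ (a : AY) : AY := lift_arc volt (fX (cov a)) (val a).2.2.

Lemma cover_lift_face_succ a : cov (lift_face_succ a) = fX (cov a).
Proof. exact: cover_lift_arc. Qed.

Lemma cover_iter_lift_face_succ k a :
  cov (iter k lift_face_succ a) = iter k fX (cov a).
Proof. by elim: k => //= k IHk; rewrite cover_lift_face_succ IHk. Qed.

Hypothesis adj_sym : symmetric adj.
Hypothesis rot_inj : injective rot.
Hypothesis rot_tail : forall a, arc_tail (rot a) = arc_tail a.

Lemma arc_revE (a : garc adj) : val (arc_rev a) = ((val a).2, (val a).1).
Proof. by rewrite insubdK // unfold_in /= adj_sym (valP a). Qed.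

Lemma arc_rev_inj : injective (@arc_rev V adj).
Proof.
move=> a b /(congr1 val); rewrite !arc_revE => -[e2 e1].
by apply: val_inj; rewrite [val a]surjective_pairing [val b]surjective_pairing e1 e2.
Qed.

Lemma face_succ_inj : injective fX.
Proof. by move=> a b /rot_inj /arc_rev_inj. Qed.

Lemma face_succ_tail b : arc_tail (fX b) = arc_head b.
Proof. by rewrite /face_succ rot_tail /arc_tail arc_revE. Qed.

Lemma lift_face_succ_tail a : arc_tail (lift_face_succ a) = arc_head a.
Proof.
rewrite [RHS]surjective_pairing /arc_tail /=.
by rewrite -[(val (fX _)).1]/(arc_tail _) face_succ_tail.
Qed.

Lemma voltage_face_relE a b :
  voltage_face_rel volt fX a b = (b == lift_face_succ a).
Proof.
apply/andP/eqP => [[/eqP ab /eqP cov_b] | ->].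
  rewrite -(lift_arc_cover b) cov_b; congr lift_arc.
  by rewrite -[(val b).1]/(arc_tail b) -ab.
by rewrite lift_face_succ_tail cover_lift_face_succ.
Qed.

Lemma lift_face_succ_inj : injective lift_face_succ.
Proof.
move=> a1 a2 /lift_arc_inj[/face_succ_inj cov_a head_g].
rewrite -(lift_arc_cover a1) -(lift_arc_cover a2) cov_a; congr lift_arc.
move/(congr1 val): cov_a => -[tail_eq head_eq].
apply: (mulIg (volt (val a1).1.1 (val a1).2.1)).
by rewrite -volt_arcE head_g volt_arcE tail_eq head_eq.
Qed.

Lemma voltage_faces :
  faces_of (voltage_face_rel volt fX) = faces_of (frel lift_face_succ).
Proof.
apply: eq_imset => a; apply/setP => b; rewrite !inE.
by apply: eq_connect => x y; rewrite voltage_face_relE eq_sym.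
Qed.

End LiftedFaces.

Lemma reflection_intertwine (R : comPzRingType) m n (P : 'M[R]_m) (P' : 'M[R]_n)
    (L : 'M[R]_(m, n)) :
  P *m L = L *m P' -> (2%:R *: P - 1%:M) *m L = L *m (2%:R *: P' - 1%:M).
Proof.
by move=> PL; rewrite mulmxBl mulmxBr -scalemxAl PL scalemxAr mul1mx mulmx1.
Qed.

Section Intertwining.
Variable R : rcfType.
Variables (V : finType) (adj : rel V) (gT : finGroupType) (volt : V -> V -> gT).
Variable rot : garc adj -> garc adj.
Hypothesis adj_sym : symmetric adj.
Hypothesis rot_inj : injective rot.
Hypothesis rot_tail : forall a, arc_tail (rot a) = arc_tail a.

Local Notation AX := (garc adj).
Local Notation AY := (garc (volt_adj adj volt)).
Local Notation fX := (face_succ rot).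
Local Notation fY := (@lift_face_succ V adj gT volt rot).
Local Notation cov := (cover_arc volt).
Local Notation sqrtG := (Num.sqrt (#|gT|%:R : R)).
Local Notation L := (@cover_char_mx R V adj gT volt).

Lemma cover_char_mxE : L = kmx (fun c b => ((cov c == b) : nat)%:R / sqrtG).
Proof.
apply/matrixP => i j; rewrite !mxE; congr (_ / Num.sqrt _).
under eq_bigr => k _ do rewrite mxE sqr_natb.
rewrite -(big_enum_val (A := predT) (fun c => ((cov c == enum_val j) : nat)%:R)) /=.
exact: sum_cover_fiber.
Qed.

Lemma cover_char_mx_isometry : L^T *m L = 1%:M.
Proof.
have G_neq0 : (#|gT|%:R : R) != 0 by rewrite pnatr_eq0 -lt0n -cardsT cardG_gt0.
rewrite cover_char_mxE tr_kmx mul_kmx; apply/matrixP => i j; rewrite !mxE.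
under eq_bigr => c _ do rewrite mulr_div_sqrt ?ler0n //.
transitivity (\sum_c ((cov c == enum_val i) : nat)%:R *
                 (((enum_val i == enum_val j) : nat)%:R / (#|gT|%:R : R))).
  apply: eq_bigr => c _; rewrite mulrA; congr (_ / _).
  by case: eqP => [->|_]; rewrite ?mul0r // -natrM mulnb andb_idl // => /eqP.
rewrite -mulr_suml sum_cover_fiber (inj_eq enum_val_inj).
by case: (i == j); rewrite ?mul0r ?mulr0 // mul1r mulfV.
Qed.

Local Notation MhX := (normalize_cols (arc_face_mx R (faces_of (frel fX)))).
Local Notation MhY := (normalize_cols (arc_face_mx R (faces_of (voltage_face_rel volt fX)))).
Local Notation NhX := (normalize_cols (arc_tail_mx R (@arc_tail V adj))).
Local Notation NhY := (normalize_cols (arc_tail_mx R (@arc_tail _ (volt_adj adj volt)))).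

Lemma face_projector_intertwine : (MhY *m MhY^T) *m L = L *m (MhX *m MhX^T).
Proof.
have fX_inj := face_succ_inj adj_sym rot_inj.
have fY_inj := lift_face_succ_inj (volt := volt) adj_sym rot_inj.
rewrite voltage_faces // !face_projector // cover_char_mxE !mul_kmx.
set N := (#|AX| + #|AY|)`!.
have N_gt0 : (0 < N)%N := fact_gt0 _.
have avgX := fconnect_time_average fX_inj R N_gt0 (order_dvdn_fact fX (leq_addr _ _)).
have avgY := fconnect_time_average fY_inj R N_gt0 (order_dvdn_fact fY (leq_addl _ _)).
apply: eq_kmx => a b.
under eq_bigr => c _ do rewrite avgY -mulrA mulr_suml.
under [RHS]eq_bigr => c _ do rewrite avgX -mulrA.
rewrite sum_eq_delta exchange_big /=.
under eq_bigr => k _ do rewrite sum_eq_delta cover_iter_lift_face_succ.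
rewrite -mulr_sumr -mulr_suml; ring.
Qed.

Lemma tail_projector_intertwine : (NhY *m NhY^T) *m L = L *m (NhX *m NhX^T).
Proof.
rewrite !tail_projector cover_char_mxE !mul_kmx; apply: eq_kmx => a b.
under [RHS]eq_bigr => c _ do rewrite -mulrA.
rewrite sum_eq_delta.
have deg_a : outdeg R (@arc_tail _ (volt_adj adj volt)) (arc_tail a)
             = outdeg R (@arc_tail V adj) (arc_tail (cov a)).
  by rewrite [arc_tail a]surjective_pairing outdeg_volt_adj.
have tail_b : (arc_tail b == (arc_tail a).1) = (arc_tail (cov a) == arc_tail b).
  exact: eq_sym.
transitivity (\sum_(c : AY) (((arc_tail c == arc_tail a) : nat)%:R * ((cov c == b) : nat)%:R)
   * ((outdeg R (@arc_tail _ (volt_adj adj volt)) (arc_tail a))^-1 / sqrtG)).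
  by apply: eq_bigr => c _; rewrite [arc_tail a == _]eq_sym; ring.
by rewrite -mulr_suml sum_cover_fiber_tail tail_b deg_a; ring.
Qed.

Lemma transition_mx_intertwine :
  transition_mx R (@arc_tail _ (volt_adj adj volt)) (faces_of (voltage_face_rel volt fX)) *m L
  = L *m transition_mx R (@arc_tail V adj) (faces_of (frel fX)).
Proof.
rewrite /transition_mx /= -mulmxA (reflection_intertwine tail_projector_intertwine).
by rewrite [LHS]mulmxA (reflection_intertwine face_projector_intertwine) mulmxA.
Qed.

End Intertwining.

Lemma intertwined_eigen_orthogonal (F : fieldType) m n p q (Wx : 'M[F]_n)
    (Wy : 'M[F]_m) (L : 'M[F]_(m, n)) (G : 'M[F]_(p, m)) (P : 'M[F]_(n, q)) a b :
  Wy *m L = L *m Wx -> G *m Wy = b *: G -> Wx *m P = a *: P -> a != b ->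
  G *m L *m P = 0.
Proof.
move=> WL GW WP ab.
have GLP_b : b *: (G *m L *m P) = G *m Wy *m L *m P by rewrite GW !scalemxAl.
have GLP_a : a *: (G *m L *m P) = G *m L *m Wx *m P by rewrite -!mulmxA WP !scalemxAr.
have : (b - a) *: (G *m L *m P) = 0.
  by rewrite scalerBl GLP_b GLP_a -[G *m Wy *m L]mulmxA WL !mulmxA subrr.
by move/eqP; rewrite scaler_eq0 subr_eq0 eq_sym (negbTE ab) => /eqP.
Qed.

Section SpectralCompression.
Variable R : realType.

Lemma spectral_projector_eigen n (W : 'M[R[i]]_n) s F a :
  spectral_decomposition W s F -> a \in s ->
  F a *m W = a *: F a /\ W *m F a = a *: F a.
Proof.
case=> uniq_s [projF [orthF [_ ->]]] a_s; split.
- rewrite mulmx_sumr (bigD1_seq a) //= -scalemxAr (projF a a_s).2.1.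
  rewrite big1_seq ?addr0 // => c /andP[ca c_s].
  by rewrite -scalemxAr orthF ?scaler0 // eq_sym.
- rewrite mulmx_suml (bigD1_seq a) //= -scalemxAl (projF a a_s).2.1.
  rewrite big1_seq ?addr0 // => c /andP[ca c_s].
  by rewrite -scalemxAl orthF ?scaler0.
Qed.

Lemma spectral_sum_compress m n (Wx : 'M[R[i]]_n) (Wy : 'M[R[i]]_m)
    (L : 'M[R[i]]_(m, n)) s F t G (h : R[i] -> R[i]) :
  L^T *m L = 1%:M -> Wy *m L = L *m Wx ->
  spectral_decomposition Wx s F -> spectral_decomposition Wy t G ->
  \sum_(a <- s) h a *: F a = L^T *m (\sum_(b <- t) h b *: G b) *m L.
Proof.
move=> LL WL decX decY.
have [_ [_ [_ [sumF _]]]] := decX; have [_ [_ [_ [sumG _]]]] := decY.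
have GLF a : a \in s ->
    \sum_(b <- t) h b *: (G b *m L *m F a) = h a *: (L *m F a).
  move=> a_s; transitivity (\sum_(b <- t) h a *: (G b *m L *m F a)).
    rewrite !big_seq; apply: eq_bigr => b b_t; have [-> //|ab] := eqVneq a b.
    rewrite (intertwined_eigen_orthogonal WL _ _ ab) ?scaler0 //.
      exact: (spectral_projector_eigen decY b_t).1.
    exact: (spectral_projector_eigen decX a_s).2.
  by rewrite -scaler_sumr -!mulmx_suml sumG mul1mx.
rewrite -[RHS]mulmx1 -sumF mulmx_sumr big_seq [RHS]big_seq; apply: eq_bigr => a a_s.
rewrite -!mulmxA mulmx_suml.
under eq_bigr => b _ do rewrite -scalemxAl mulmxA.
by rewrite GLF // scalemxAr mulmxA LL mul1mx.
Qed.

End SpectralCompression.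

Unset Implicit Arguments.
Theorem theorem6p2
  (R : realType) (V : finType) (adj : rel V)
  (rot : garc adj -> garc adj)
  (gT : finGroupType) (volt : V -> V -> gT) :
  (* X is a connected simple graph *)
  simple_graph adj -> connected_graph adj ->
  (* M_X : an orientable (rotation-system) embedding of X, which is circular *)
  rotation_system rot ->
  circular (frel (face_succ rot)) ->
  (* Y = X^phi is a connected voltage graph of X *)
  voltage_ok adj volt ->
  connected_graph (volt_adj adj volt) ->
  let UX := transition_mx R (@arc_tail V adj) (faces_of (frel (face_succ rot))) in
  let UY := transition_mx R (@arc_tail _ (volt_adj adj volt))
              (faces_of (voltage_face_rel volt (face_succ rot))) in
  let Lh := cover_char_mx R volt in
  UX = Lh^T *m UY *m Lh /\
  (forall HX HY,
     principal_hamiltonian (cmx (UX ^+ 2)) HX ->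
     principal_hamiltonian (cmx (UY ^+ 2)) HY ->
     HX = quotient_mx HY Lh).
Proof.
move=> [adj_sym _] _ [rot_inj [rot_tail _]] _ _ _ UX UY L.
have UY_L : UY *m L = L *m UX by apply: transition_mx_intertwine.
have LL : L^T *m L = 1%:M by apply: cover_char_mx_isometry.
split; first by rewrite -mulmxA UY_L mulmxA LL mul1mx.
move=> HX HY [s [F [decX ->]]] [t [G [decY ->]]].
apply: spectral_sum_compress decX decY.
- by rewrite /cmx map_trmx -map_mxM LL map_mx1.
- by rewrite /cmx -!map_mxM !expr2 -!mulmxE -mulmxA UY_L mulmxA UY_L -mulmxA.
Qed.
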